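(* For every integer $m\ge 2$, the shift graph $H_m$ belongs to $(m-1)$-CBU. Furthermore, $H_m$ has a CBU representation in which, in the first dimension (the coordinate along $e_1$), the box of the vertex $(i,j)$ projects onto the interval $[i,j]$.
   Context: The shift graph $H_m$ has as vertices the ordered pairs $(i,j)$ of integers with $1\le i<j\le m$, and two pairs $(i,j)$ and $(k,l)$ are adjacent iff $j=k$ or $l=i$. Let $e_1,\ldots,e_d$ be the standard basis of $\mathbb{R}^d$. For $d\ge 1$, a graph belongs to $d$-CBU if one can assign to each vertex an axis-parallel box (product of $d$ closed intervals of positive length) in $\mathbb{R}^d$ such that the boxes have pairwise disjoint interiors, two distinct vertices are adjacent iff their boxes intersect, and any two intersecting boxes intersect in a $(d-1)$-dimensional box orthogonal to $e_1$; such an assignment is a CBU representation. *)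

From HB Require Import structures.
From mathcomp Require Import all_boot all_order all_algebra.
From mathcomp Require Import reals.
Set Implicit Arguments. Unset Strict Implicit. Unset Printing Implicit Defensive.
Import Order.TTheory GRing.Theory Num.Theory.
Local Open Scope ring_scope.

Section Boxes.
Variable R : realType.

(* An axis-parallel box prod_k [lo k, hi k] in R^d (positivity of lengths is
   required separately in CBU_rep). Coordinate 0 is the e_1 direction. *)
Record box (d : nat) := Box { lo : 'I_d -> R ; hi : 'I_d -> R }.

Definition in_box d (B : box d) (x : 'I_d -> R) : Prop :=
  forall k, lo B k <= x k <= hi B k.

Definition in_interior d (B : box d) (x : 'I_d -> R) : Prop :=
  forall k, lo B k < x k < hi B k.

Definition boxes_meet d (B1 B2 : box d) : Prop :=
  exists x, in_box B1 x /\ in_box B2 x.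

Definition meet_is_facet_orth_e1 d (B1 B2 : box d) : Prop :=
  exists (c : R) (lo' hi' : 'I_d -> R),
    (forall k : 'I_d, val k != 0%N -> lo' k < hi' k) /\
    (forall x, (in_box B1 x /\ in_box B2 x) <->
       (forall k : 'I_d, if val k == 0%N then x k = c
                         else lo' k <= x k <= hi' k)).

Definition CBU_rep d (V : Type) (adj : V -> V -> Prop) (B : V -> box d) : Prop :=
  [/\ (forall v k, lo (B v) k < hi (B v) k),
      (forall u v, u <> v -> ~ exists x, in_interior (B u) x /\ in_interior (B v) x),
      (forall u v, u <> v -> (adj u v <-> boxes_meet (B u) (B v)))
    & (forall u v, u <> v -> boxes_meet (B u) (B v) ->
                   meet_is_facet_orth_e1 (B u) (B v))].

Definition in_CBU d (V : Type) (adj : V -> V -> Prop) : Prop :=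
  exists B : V -> box d, CBU_rep adj B.

End Boxes.

Definition shift_vertex (m : nat) : Type :=
  {p : nat * nat | (1 <= p.1)%N && (p.1 < p.2)%N && (p.2 <= m)%N}.

Definition shift_adj (m : nat) (u v : shift_vertex m) : Prop :=
  (val u).2 = (val v).1 \/ (val v).2 = (val u).1.

(* The e_1-coordinate of the box of (i,j) is [i,j].  Every other coordinate
   belongs to an integer t with 1 < t < m, along which the box of (i,j) spans
   [2,3] if t is i or j, [0,1] if i < t < j, and [0,3] otherwise.  Two distinct
   vertices whose intervals overlap in more than a point admit some t that is
   an endpoint of one interval and interior to the other, so their boxes are
   separated along t.  If instead one interval ends where the other begins,
   no such t exists: the boxes overlap with positive length in every other
   coordinate and meet in a facet orthogonal to e_1. *)
From HB Require Import structures.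
From mathcomp Require Import all_boot all_order all_algebra.
From mathcomp Require Import reals.
From mathcomp Require Import lra zify.
Import Order.TTheory GRing.Theory Num.Theory.
Local Open Scope ring_scope.
Set Implicit Arguments. Unset Strict Implicit.

Section BoxFacts.
Variables (R : realType) (d : nat).
Implicit Types B : box R d.

Lemma boxes_meet_overlap B1 B2 k : boxes_meet B1 B2 ->
  lo B1 k <= hi B2 k /\ lo B2 k <= hi B1 k.
Proof.
case=> x [/(_ k)/andP[l1 h1] /(_ k)/andP[l2 h2]].
by split; [exact: le_trans h2 | exact: le_trans h1].
Qed.

Lemma interiors_meet_overlap B1 B2 k :
  (exists x, in_interior B1 x /\ in_interior B2 x) ->
  lo B1 k < hi B2 k /\ lo B2 k < hi B1 k.
Proof.
case=> x [/(_ k)/andP[l1 h1] /(_ k)/andP[l2 h2]].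
by split; [exact: lt_trans h2 | exact: lt_trans h1].
Qed.

Lemma separated_boxes_not_meet B1 B2 k :
  hi B2 k < lo B1 k \/ hi B1 k < lo B2 k -> ~ boxes_meet B1 B2.
Proof. by move=> sep /(boxes_meet_overlap k) []; case: sep; lra. Qed.

Lemma interiors_meet_boxes_meet B1 B2 :
  (exists x, in_interior B1 x /\ in_interior B2 x) -> boxes_meet B1 B2.
Proof.
case=> x [in1 in2]; exists x.
by split=> k; [case/andP: (in1 k) | case/andP: (in2 k)] => /ltW -> /ltW ->.
Qed.

Lemma facet_orth_e1C B1 B2 :
  meet_is_facet_orth_e1 B1 B2 -> meet_is_facet_orth_e1 B2 B1.
Proof.
case=> c [lo' [hi' [lt_lohi meetE]]]; exists c, lo', hi'; split=> // x.
by rewrite -meetE; split=> -[].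
Qed.

Lemma facet_orth_e1_meet B1 B2 :
  meet_is_facet_orth_e1 B1 B2 -> boxes_meet B1 B2.
Proof.
case=> c [lo' [hi' [lt_lohi meetE]]].
exists (fun k => if val k == 0%N then c else lo' k); apply/meetE => k.
by case: eqP => // /eqP/lt_lohi/ltW ->; rewrite lexx.
Qed.

Lemma touching_boxes_facet B1 B2 (c : R) :
  (forall k, lo B1 k < hi B1 k) -> (forall k, lo B2 k < hi B2 k) ->
  (forall k, val k == 0%N -> hi B1 k = c /\ lo B2 k = c) ->
  (forall k, val k != 0%N ->
     Num.max (lo B1 k) (lo B2 k) < Num.min (hi B1 k) (hi B2 k)) ->
  meet_is_facet_orth_e1 B1 B2.
Proof.
move=> pos1 pos2 touch overlap.
exists c, (fun k => Num.max (lo B1 k) (lo B2 k)),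
  (fun k => Num.min (hi B1 k) (hi B2 k)); split=> // x.
split=> [[in1 in2] k | inI].
- have /andP[l1 h1] := in1 k; have /andP[l2 h2] := in2 k.
  case: ifP => [/touch[hi1 lo2] | _]; last by rewrite ge_max le_min l1 l2 h1 h2.
  by apply/eqP; rewrite eq_le -{1}hi1 h1 -lo2 l2.
- split=> k; have := inI k.
  + case: ifP => [/touch[hi1 _] -> | _]; first by rewrite -hi1 lexx (ltW (pos1 k)).
    by rewrite ge_max le_min => /andP[/andP[-> _] /andP[-> _]].
  + case: ifP => [/touch[_ lo2] -> | _]; first by rewrite -lo2 lexx (ltW (pos2 k)).
    by rewrite ge_max le_min => /andP[/andP[_ ->] /andP[_ ->]].
Qed.

End BoxFacts.

Section ShiftGraphBoxes.
Variables (R : realType) (m : nat).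
Hypothesis m_ge2 : (2 <= m)%N.
Implicit Types u v : shift_vertex m.

Local Notation src v := (val v).1.
Local Notation dst v := (val v).2.

Lemma shift_vertexP v : [/\ (1 <= src v)%N, (src v < dst v)%N & (dst v <= m)%N].
Proof. by case: v => [[i j]] /= /andP[/andP[]]. Qed.

Lemma shift_vertex_inj u v : src u = src v -> dst u = dst v -> u = v.
Proof.
case: u v => [[i j] ij] [[i' j'] ij'] /= eq_i eq_j; subst i' j'.
by congr exist; exact: bool_irrelevance.
Qed.

Definition endpoint v t := (src v == t) || (dst v == t).
Definition inside v t := (src v < t < dst v)%N.
Definition conflict u v t := (endpoint u t && inside v t) || (endpoint v t && inside u t).

Definition lo_at v t : R := if endpoint v t then 2 else 0.
Definition hi_at v t : R := if inside v t then 1 else 3.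

Lemma endpoint_not_inside v t : endpoint v t -> inside v t = false.
Proof. by rewrite /endpoint /inside; lia. Qed.

Lemma lo_at_lt_hi_at v t : lo_at v t < hi_at v t.
Proof.
rewrite /lo_at /hi_at; case: ifP => [/endpoint_not_inside -> | _]; first lra.
by case: ifP; lra.
Qed.

Lemma conflict_separates u v t : conflict u v t ->
  hi_at v t < lo_at u t \/ hi_at u t < lo_at v t.
Proof.
rewrite /lo_at /hi_at => /orP[/andP[-> ->] | /andP[-> ->]]; [left | right]; lra.
Qed.

Lemma no_conflict_overlap u v t : ~~ conflict u v t ->
  Num.max (lo_at u t) (lo_at v t) < Num.min (hi_at u t) (hi_at v t).
Proof.
move: (lo_at_lt_hi_at u t) (lo_at_lt_hi_at v t).
rewrite /conflict /lo_at /hi_at gt_max !lt_min.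
by case: (endpoint u t); case: (endpoint v t); case: (inside u t);
  case: (inside v t) => //=; lra.
Qed.

Lemma adjacent_no_conflict u v t : dst u = src v -> ~~ conflict u v t.
Proof.
case: (shift_vertexP u) (shift_vertexP v) => ? ? ? [? ? ?].
by rewrite /conflict /endpoint /inside; lia.
Qed.

Lemma distinct_overlap_conflict u v : u <> v ->
  (src u < dst v)%N -> (src v < dst u)%N -> exists2 t, (1 < t < m)%N & conflict u v t.
Proof.
move=> neq_uv uv vu.
case: (shift_vertexP u) (shift_vertexP v) => ? ? ? [? ? ?].
rewrite /conflict /endpoint /inside.
case: (ltngtP (src u) (src v)) => [lt_src|lt_src|eq_src].
- by exists (src v); lia.
- by exists (src u); lia.
case: (ltngtP (dst u) (dst v)) => [lt_dst|lt_dst|eq_dst].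
- by exists (dst u); lia.
- by exists (dst v); lia.
by case: neq_uv; apply: shift_vertex_inj.
Qed.

(* Coordinate [k > 0] of the boxes belongs to the integer point [k + 1]. *)
Definition shift_box v : box R m.-1 :=
  Box (fun k => if val k == 0%N then (src v)%:R else lo_at v (val k).+1)
      (fun k => if val k == 0%N then (dst v)%:R else hi_at v (val k).+1).

Lemma predm_gt0 : (0 < m.-1)%N.
Proof. by rewrite ltn_predRL. Qed.

Definition e1 : 'I_m.-1 := Ordinal predm_gt0.

Lemma lo_shift_box_e1 v : lo (shift_box v) e1 = (src v)%:R.
Proof. by []. Qed.

Lemma hi_shift_box_e1 v : hi (shift_box v) e1 = (dst v)%:R.
Proof. by []. Qed.

Lemma coord_of_point t : (1 < t < m)%N ->
  exists k : 'I_m.-1, val k != 0%N /\ (val k).+1 = t.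
Proof.
move=> t_mid; have t_lt : (t.-1 < m.-1)%N by lia.
by exists (Ordinal t_lt) => /=; lia.
Qed.

Lemma shift_box_pos v k : lo (shift_box v) k < hi (shift_box v) k.
Proof.
rewrite /=; case: ifP => _; last exact: lo_at_lt_hi_at.
by rewrite ltr_nat; case: (shift_vertexP v).
Qed.

Lemma shift_box_separated u v : u <> v -> (src u < dst v)%N -> (src v < dst u)%N ->
  exists k, hi (shift_box v) k < lo (shift_box u) k \/
            hi (shift_box u) k < lo (shift_box v) k.
Proof.
move=> neq_uv uv vu; have [t t_mid uvt] := distinct_overlap_conflict neq_uv uv vu.
have [k [k_neq0 kt]] := coord_of_point t_mid.
by exists k; rewrite /= (negbTE k_neq0) kt; exact: conflict_separates.
Qed.

Lemma shift_box_meet_adj u v : u <> v ->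
  boxes_meet (shift_box u) (shift_box v) -> shift_adj u v.
Proof.
move=> neq_uv meet_uv; have [] := boxes_meet_overlap e1 meet_uv.
rewrite !lo_shift_box_e1 !hi_shift_box_e1 !ler_nat /shift_adj => le_uv le_vu.
case: (ltngtP (src u) (dst v)) => [lt_uv||->]; [|lia|by right].
case: (ltngtP (src v) (dst u)) => [lt_vu||->]; [|lia|by left].
have [k sep] := shift_box_separated neq_uv lt_uv lt_vu.
by case: (separated_boxes_not_meet sep).
Qed.

Lemma shift_box_facet u v : dst u = src v ->
  meet_is_facet_orth_e1 (shift_box u) (shift_box v).
Proof.
move=> uv; apply: (touching_boxes_facet (c := (dst u)%:R)) => [||k|k].
1,2: exact: shift_box_pos.
- by move=> /= ->; rewrite uv.
- by move=> /= /negbTE ->; apply/no_conflict_overlap/adjacent_no_conflict.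
Qed.

Lemma shift_adj_facet u v : shift_adj u v ->
  meet_is_facet_orth_e1 (shift_box u) (shift_box v).
Proof. by case=> [/shift_box_facet | /shift_box_facet/facet_orth_e1C]. Qed.

Lemma shift_box_CBU : CBU_rep (@shift_adj m) shift_box.
Proof.
split=> [||u v neq_uv|u v neq_uv].
- exact: shift_box_pos.
- move=> u v neq_uv meet_int; have [] := interiors_meet_overlap e1 meet_int.
  rewrite !lo_shift_box_e1 !hi_shift_box_e1 !ltr_nat => uv vu.
  have [k sep] := shift_box_separated neq_uv uv vu.
  exact/(separated_boxes_not_meet sep)/interiors_meet_boxes_meet.
- by split=> [/shift_adj_facet/facet_orth_e1_meet | /(shift_box_meet_adj neq_uv)].
- by move=> /(shift_box_meet_adj neq_uv)/shift_adj_facet.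
Qed.

End ShiftGraphBoxes.

Theorem mainTheorem11 (R : realType) (m : nat) (hm : (2 <= m)%N) :
  in_CBU R m.-1 (@shift_adj m) /\
  exists B : shift_vertex m -> box R m.-1,
    CBU_rep (@shift_adj m) B /\
    (forall (v : shift_vertex m) (k : 'I_m.-1), val k = 0%N ->
       lo (B v) k = ((val v).1)%:R /\ hi (B v) k = ((val v).2)%:R).
Proof.
have rep := shift_box_CBU R hm.
split; first by exists (@shift_box R m).
by exists (@shift_box R m); split=> // v k /= ->.
Qed.
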